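(* Let $f(X,I)=f_0(I)+f_1(I)X+f_2(I)X^2$ with $f_0,f_1,f_2$ smooth real functions on $[0,\infty)$. Put $\lambda:=f_0(1)$, $P_f(I):=(f_0(I)-\lambda I)/(1-I)$ (smoothly extended to $I=1$), $h_f(z,I):=P_f(I)+zf_1(I)+z^2(I+(1-I)f_2(I))$. Let $\mathcal{B}=\{(\beta_1,\beta_2):\beta_1>\beta_2\}$ and let $\mathcal{B}_f$ be the set of $\beta\in\mathcal{B}$ with $\beta_2\le\lambda\le\beta_1$ and $h_f(\beta_i,I)/(\beta_j-\beta_i)\ge0$ for all $I\in[0,1]$ and $\{i,j\}=\{1,2\}$. Define $\mathcal{B}_f^+:=\{z\ge\lambda: h_f(z,I)\le0\ \forall I\in[0,1]\}$ and $\mathcal{B}_f^-:=\{z\le\lambda: h_f(z,I)\ge 0\ \forall I\in[0,1]\}$. Then $\mathcal{B}_f=(\mathcal{B}_f^+\times\mathcal{B}_f^-)\cap\mathcal{B}$.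
   Context: Such an $f$ (an ''$X^2$-model'') defines the replacement number dynamics $\dot X=f(X,I)$, $\dot I=(X-1)I$; $\mathcal{B}_f$ is the set of $f$-compatible transmission pairs, i.e. those for which the associated SSISS model $\dot S_i=(-\beta_iS_i+\gamma_i)I-A_i(I)S_i+A_j(I)S_j-(\beta_i-\beta_j)f_2(I)S_1S_2$ with $A_i(I)=h_f(\beta_i,I)/(\beta_j-\beta_i)$, $\gamma_1+\gamma_2=1$, $\beta_1\gamma_1+\beta_2\gamma_2=\lambda$ satisfies $\gamma_i\ge0$, $A_i\ge0$ on $[0,1]$. *)

From Stdlib Require Import Reals.
From Coquelicot Require Import Coquelicot.
Open Scope R_scope.

Definition smooth_on_nonneg (f : R -> R) : Prop :=
  (forall (n : nat) (x : R), 0 < x -> ex_derive (Derive_n f n) x) /\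
  (forall n : nat, filterlim (Derive_n f n) (at_right 0) (locally (Derive_n f n 0))).

Definition lam (f0 : R -> R) : R := f0 1.

(* P_f(I) := (f0(I) - lambda I)/(1 - I), extended at I = 1 by its limit
   (= lambda - f0'(1), the smooth extension). *)
Definition Pf (f0 : R -> R) (I : R) : R :=
  if Req_dec_T I 1 then lam f0 - Derive f0 1
  else (f0 I - lam f0 * I) / (1 - I).

Definition hf (f0 f1 f2 : R -> R) (z I : R) : R :=
  Pf f0 I + z * f1 I + z ^ 2 * (I + (1 - I) * f2 I).

Definition inB (b : R * R) : Prop := fst b > snd b.

Definition inBf (f0 f1 f2 : R -> R) (b : R * R) : Prop :=
  inB b /\ snd b <= lam f0 <= fst b /\
  (forall I, 0 <= I <= 1 ->
     hf f0 f1 f2 (fst b) I / (snd b - fst b) >= 0 /\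
     hf f0 f1 f2 (snd b) I / (fst b - snd b) >= 0).

Definition inBfplus (f0 f1 f2 : R -> R) (z : R) : Prop :=
  z >= lam f0 /\ forall I, 0 <= I <= 1 -> hf f0 f1 f2 z I <= 0.
Definition inBfminus (f0 f1 f2 : R -> R) (z : R) : Prop :=
  z <= lam f0 /\ forall I, 0 <= I <= 1 -> hf f0 f1 f2 z I >= 0.

From Stdlib Require Import Reals Lra.
From Coquelicot Require Import Coquelicot.
Open Scope R_scope.

(* Since b1 > b2, the conditions h(b_i, I) / (b_j - b_i) >= 0 only fix the sign
   of h(b_i, I): nonpositive at the larger rate b1, nonnegative at the smaller
   rate b2.  The two conditions decouple, giving the product description. *)

Lemma Rdiv_ge0_pos_iff (h d : R) : 0 < d -> (h / d >= 0 <-> h >= 0).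
Proof.
  intro Hd. split; intro H.
  - replace h with (h / d * d) by (field; lra). nra.
  - unfold Rdiv. apply Rle_ge, Rmult_le_pos; [lra|].
    left. apply Rinv_0_lt_compat. exact Hd.
Qed.

Lemma Rdiv_ge0_neg_iff (h d : R) : d < 0 -> (h / d >= 0 <-> h <= 0).
Proof.
  intro Hd. replace (h / d) with (- h / - d) by (field; lra).
  rewrite (Rdiv_ge0_pos_iff (- h) (- d)); lra.
Qed.

Lemma rate_sign_conditions_iff (h : R -> R -> R) (b1 b2 : R) : b2 < b1 ->
  (forall I, 0 <= I <= 1 -> h b1 I / (b2 - b1) >= 0 /\ h b2 I / (b1 - b2) >= 0) <->
  (forall I, 0 <= I <= 1 -> h b1 I <= 0) /\ (forall I, 0 <= I <= 1 -> h b2 I >= 0).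
Proof.
  intro Hb.
  assert (Hlarge : forall I, h b1 I / (b2 - b1) >= 0 <-> h b1 I <= 0)
    by (intro I; apply Rdiv_ge0_neg_iff; lra).
  assert (Hsmall : forall I, h b2 I / (b1 - b2) >= 0 <-> h b2 I >= 0)
    by (intro I; apply Rdiv_ge0_pos_iff; lra).
  split.
  - intro H. split; intros I HI; destruct (H I HI) as [H1 H2].
    + apply Hlarge. exact H1.
    + apply Hsmall. exact H2.
  - intros [H1 H2] I HI. split.
    + apply Hlarge, H1, HI.
    + apply Hsmall, H2, HI.
Qed.

Theorem lemma4p3 (f0 f1 f2 : R -> R) :
  smooth_on_nonneg f0 -> smooth_on_nonneg f1 -> smooth_on_nonneg f2 ->
  forall b : R * R,
    inBf f0 f1 f2 b <->
    ((inBfplus f0 f1 f2 (fst b) /\ inBfminus f0 f1 f2 (snd b)) /\ inB b).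
Proof.
  intros _ _ _ [b1 b2]. unfold inBf, inBfplus, inBfminus, inB; simpl.
  split.
  - intros [Hb [Hlam Hh]].
    apply (rate_sign_conditions_iff (hf f0 f1 f2) b1 b2) in Hh as [Hplus Hminus]; [|lra].
    split; [split; split|]; solve [lra | assumption].
  - intros [[[Hlam1 Hplus] [Hlam2 Hminus]] Hb].
    split; [lra | split; [lra|]].
    apply (rate_sign_conditions_iff (hf f0 f1 f2) b1 b2); [lra | split; assumption].
Qed.
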